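(* Consider an instance of the MSSN-MC-HC problem with $m=|Q|$ sources and costs $c_s>0$, $c_r>0$, for which there exists a feasible solution using exactly one sink. Suppose there exists $\alpha\in(0,1]$ such that $\frac{c_s}{c_r}\ge\lceil\alpha m\rceil(\lceil\alpha m\rceil+1)(h_{\max}-1)$. Then the approximation ratio of SmartSelect on such instances (cost of its output divided by the optimum cost) is at most $1+\frac{1}{\alpha}$.
   Context: MSSN-MC-HC problem: given a finite undirected graph $G=(V,E)$ with $V=Q\cup R\cup B$ (pairwise disjoint; $Q$ = sources, $R$ = potential relay locations, $B$ = potential sink locations), costs $c_s$ per sink and $c_r$ per relay, and a positive integer $h_{\max}$, select $B'\subseteq B$, $R'\subseteq R$ such that in the subgraph induced by $Q\cup R'\cup B'$ every source has a path of at most $h_{\max}$ edges to some sink of $B'$ (a feasible solution), minimizing $c_s|B'|+c_r|R'|$. A feasible solution ''using exactly one sink'' has $|B'|=1$. SmartSelect algorithm: (1) If for some $b\in B$ every source has a path of at most $h_{\max}$ edges to $b$ in the subgraph induced by $Q\cup B$, output $(\{b\},\emptyset)$. (2) If some source has no path of at most $h_{\max}$ edges in $G$ to any sink, declare infeasible. (3) For each $b_i\in B$ let $Q_i$ be the set of sources whose shortest path to $b_i$ in $G$ has at most $h_{\max}$ edges, and $R_i$ the set of relays whose shortest path to $b_i$ has at most $h_{\max}-1$ edges. (4) Greedy phase, iterations $j=0,1,\dots$: $B^{(0)}=B$, $Q_i^{(0)}=Q_i$; $B^{(j)}$ is the set of sinks not yet picked and $Q_i^{(j)}$ the set of sources of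 $Q_i$ not yet covered. In iteration $j$, for each $b_i\in B^{(j)}$, a relay-selection subroutine (e.g. the SPTiRP algorithm) applied to the subgraph of $G$ induced by $Q_i^{(j)}\cup R_i\cup\{b_i\}$ returns a set $\hat R_i^{(j)}\subseteq R_i$ consisting of the relays on one chosen path of at most $h_{\max}$ edges from each source of $Q_i^{(j)}$ to $b_i$. Let $n_i^{(j)}$ be the number of relays in $\hat R_i^{(j)}$ not selected in earlier iterations (earlier-selected relays have cost zero thereafter), and $C_i^{(j)}=\frac{c_s+c_r n_i^{(j)}}{|Q_i^{(j)}|}$. The sink $b_i$ with least $C_i^{(j)}$ is picked (ties broken in favor of larger $|Q_i^{(j)}|$), its sources $Q_i^{(j)}$ become covered and the relays $\hat R_i^{(j)}$ are selected. Stop when all sources are covered; output the picked sinks and selected relays. *)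

From mathcomp Require Import all_boot all_order all_algebra.
From mathcomp Require Import boolp.
Set Implicit Arguments. Unset Strict Implicit. Unset Printing Implicit Defensive.
Import Order.TTheory GRing.Theory Num.Theory.
Local Open Scope ring_scope.

Section MSSN.
Variables (K : archiRealFieldType) (T : finType) (e : rel T).
Variables (Q Rl B : {set T}) (hmax : nat) (cs cr : K).

Definition hpath (S : {set T}) (h : nat) (x y : T) : Prop :=
  exists p : seq T, [/\ path e x p, last x p = y, (size p <= h)%N
                      & all (fun v => v \in S) (x :: p)].

Definition feasible (Bp Rp : {set T}) : Prop :=
  [/\ Bp \subset B, Rp \subset Rl &
      forall q, q \in Q -> exists2 b, b \in Bp & hpath (Q :|: Rp :|: Bp) hmax q b].

Definition cost (Bp Rp : {set T}) : K := cs * #|Bp|%:R + cr * #|Rp|%:R.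

Definition optimal (Bp Rp : {set T}) : Prop :=
  feasible Bp Rp /\ forall Bp' Rp', feasible Bp' Rp' -> cost Bp Rp <= cost Bp' Rp'.

Definition Qi (b : T) : {set T} := [set q in Q | `[< hpath setT hmax q b >] ].
Definition Ri (b : T) : {set T} := [set r in Rl | `[< hpath setT hmax.-1 r b >] ].

(* Spec of the relay-selection subroutine: Rh consists of the relays on one chosen path
   of at most hmax edges, in the subgraph induced by Qj ∪ R_b ∪ {b}, from each source
   of Qj to b. *)
Definition valid_relays (b : T) (Qj Rh : {set T}) : Prop :=
  exists pf : T -> seq T,
    (forall q, q \in Qj ->
       [/\ path e q (pf q), last q (pf q) = b, (size (pf q) <= hmax)%N
         & all (fun v => v \in Qj :|: Ri b :|: [set b]) (q :: pf q)]) /\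
    Rh = \bigcup_(q in Qj) [set v | (v \in q :: pf q) && (v \in Rl)].

(* state = (picked sinks, selected relays, uncovered sources) *)
Definition state := ({set T} * {set T} * {set T})%type.

(* one iteration of the greedy phase (any valid subroutine output, any tie-breaking
   among sinks with equal C and equal |Q_i^(j)|) *)
Definition greedy_step (s s' : state) : Prop :=
  let: (P, Sel, Unc) := s in
  let cand i := [&& i \in B, i \notin P & Qi i :&: Unc != set0] in
  exists (rh : T -> {set T}) (b : T),
    let C i := (cs + cr * #|rh i :\: Sel|%:R) / #|Qi i :&: Unc|%:R in
    [/\ cand b,
        (forall i, cand i -> valid_relays i (Qi i :&: Unc) (rh i)),
        (forall i, cand i -> C b < C i \/ (C b = C i /\ (#|Qi i :&: Unc| <= #|Qi b :&: Unc|)%N))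
      & s' = (b |: P, Sel :|: rh b, Unc :\: (Qi b :&: Unc))].

Inductive greedy_reach : state -> state -> Prop :=
| gr_refl s : greedy_reach s s
| gr_step s s' s'' : greedy_step s s' -> greedy_reach s' s'' -> greedy_reach s s''.

Definition step1_sink (b : T) : Prop :=
  b \in B /\ forall q, q \in Q -> hpath (Q :|: B) hmax q b.

Definition smartselect_output (Bo Ro : {set T}) : Prop :=
  (exists b, step1_sink b /\ Bo = [set b] /\ Ro = set0) \/
  [/\ ~ (exists b, step1_sink b),
      (forall q, q \in Q -> exists2 b, b \in B & hpath setT hmax q b)
    & greedy_reach (set0, set0, Q) (Bo, Ro, set0)].

End MSSN.

(* Let b* be the sink of a feasible one-sink solution, so every source can reach b*
   and the optimum costs at least c_s. Put D = c_r (h_max - 1) and k = ceil(alpha m);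
   then k (k + 1) D <= c_s. Along the greedy phase the cost still to be paid is
   bounded by the potential F(0) = 0, F(u) = c_s + D + (c_s / (k + 1) + D)(u - 1)
   of the number u of uncovered sources: b* remains a candidate of ratio at most
   (c_s + u D) / u, and a greedy pick covering s sources either covers all of them
   (which is forced while u <= k, as otherwise the ratio of b* would be smaller) or
   pays at most s (c_s / (k + 1) + D). Finally F(m) <= c_s (1 + 1/alpha). *)

From mathcomp Require Import all_boot all_order all_algebra.
From mathcomp Require Import boolp.
From mathcomp Require Import zify ring lra.
Set Implicit Arguments. Unset Strict Implicit. Unset Printing Implicit Defensive.
Import Order.TTheory GRing.Theory Num.Theory.
Local Open Scope ring_scope.

Lemma cardsUD (T : finType) (A R : {set T}) : #|A :|: R| = (#|A| + #|R :\: A|)%N.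
Proof. have := cardsUI A R; have := cardsID A R; rewrite setIC; lia. Qed.

Lemma card_path_vertices_in (T : finType) (R : {set T}) (x : T) (p : seq T) :
  x \notin R -> last x p \notin R -> last x p != x ->
  (#|[set v | (v \in x :: p) && (v \in R)]| <= (size p).-1)%N.
Proof.
move=> xR yR yx.
have sub : [set v | (v \in x :: p) && (v \in R)] \subset [set v in x :: p] :\: [set x; last x p].
  apply/subsetP => v; rewrite !inE => /andP[-> vR]; rewrite andbT negb_or.
  by apply/andP; split; apply: contraTneq vR => ->.
have ends : [set x; last x p] \subset [set v in x :: p].
  by apply/subsetP => v; rewrite !inE => /orP[]/eqP->; rewrite -in_cons ?mem_head ?mem_last.
move: (subset_leq_card sub); rewrite cardsDS // cards2 eq_sym yx [#|[set v in x :: p]|]cardsE.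
move/leq_trans; apply; apply: leq_trans (leq_sub2r 2 (card_size _)) _.
by rewrite subSS subn1.
Qed.

Section Relays.
Variables (T : finType) (e : rel T) (Q Rl B : {set T}) (hmax : nat).
Hypotheses (dQR : [disjoint Q & Rl]) (dQB : [disjoint Q & B]) (dRB : [disjoint Rl & B]).

Lemma card_valid_relays i (Qj Rh : {set T}) :
  i \in B -> Qj \subset Q -> valid_relays e Rl hmax i Qj Rh ->
  (#|Rh| <= #|Qj| * hmax.-1)%N.
Proof.
move=> iB sQ [pf [Hpf ->]].
apply: (@leq_trans (\sum_(q in Qj) #|[set v | (v \in q :: pf q) && (v \in Rl)]|)).
  apply: (big_ind2 (fun (S : {set T}) n => #|S| <= n)%N); first by rewrite cards0.
    by move=> A1 n1 A2 n2 ? ?; apply: leq_trans (leq_card_setU A1 A2) (leq_add _ _).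
  by [].
rewrite -sum_nat_const; apply: leq_sum => q qQj.
have qQ := subsetP sQ q qQj; have [_ lq sq _] := Hpf q qQj.
apply: leq_trans (@card_path_vertices_in T Rl q (pf q) _ _ _) _; rewrite ?lq.
- by rewrite (disjointFr dQR qQ).
- by rewrite (disjointFl dRB iB).
- by apply: contraTneq qQ => <-; rewrite (disjointFl dQB iB).
- by rewrite -!subn1 leq_sub2r.
Qed.
End Relays.

Section Potential.
Variables (K : realFieldType) (cs D k : K).
Hypotheses (cs_gt0 : 0 < cs) (D_ge0 : 0 <= D) (k_ge0 : 0 <= k)
  (kD_le_cs : k * (k + 1) * D <= cs).

Definition potential (u : nat) : K :=
  if u is n.+1 then cs + D + (cs / (k + 1) + D) * n%:R else 0.

Lemma potential_addn n s :
  potential (n.+1 + s) = potential n.+1 + (cs / (k + 1) + D) * s%:R.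
Proof. by rewrite /potential addSn natrD mulrDr addrA. Qed.

Lemma potential_ge u : (0 < u)%N -> cs + u%:R * D <= potential u.
Proof.
case: u => // n _; rewrite /potential -natr1 mulrDl mul1r mulrDl.
have : 0 <= cs / (k + 1) * n%:R.
  by rewrite mulr_ge0 ?ler0n // divr_ge0 ?addr_ge0 ?ler01 // ltW.
lra.
Qed.

Lemma greedy_pick_le (X Y : K) (u s : nat) : (0 < s)%N -> (0 < u)%N ->
  X / s%:R < Y / u%:R \/ (X / s%:R = Y / u%:R /\ (u <= s)%N) ->
  X * u%:R <= Y * s%:R.
Proof.
move=> s0 u0 pick; have : X / s%:R <= Y / u%:R by case: pick => [/ltW | [-> _]].
by rewrite ler_pdivrMr ?ltr0n // mulrAC ler_pdivlMr ?ltr0n.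
Qed.

Lemma greedy_pick_all (X Y : K) (u s : nat) : (0 < s <= u)%N -> u%:R < k + 1 ->
  cs <= X -> Y <= cs + u%:R * D ->
  X / s%:R < Y / u%:R \/ (X / s%:R = Y / u%:R /\ (u <= s)%N) -> s = u.
Proof.
move=> /andP[s0 su] uk csX YD [pick|[_ us]]; last by apply/eqP; rewrite eqn_leq su.
apply/eqP; rewrite eqn_leq su leqNgt /=; apply/negP => ltsu.
have s1u : s%:R + 1 <= u%:R :> K by rewrite natr1 ler_nat.
have su_k : s%:R * u%:R <= k * (k + 1).
  by apply: ler_pM; rewrite ?ler0n //; apply: ltW; lra.
have XY : X * u%:R < Y * s%:R.
  by move: pick; rewrite ltr_pdivrMr ?ltr0n // mulrAC ltr_pdivlMr ?ltr0n // (leq_trans s0).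
have Xu : cs * u%:R <= X * u%:R by rewrite ler_wpM2r ?ler0n.
have Ys : Y * s%:R <= (cs + u%:R * D) * s%:R by rewrite ler_wpM2r ?ler0n.
have suD : s%:R * u%:R * D <= cs by apply: le_trans kD_le_cs; rewrite ler_wpM2r.
have csu : cs * (s%:R + 1) <= cs * u%:R by rewrite ler_pM2l.
suff : cs < cs by rewrite ltxx.
by move: (s%:R) (u%:R) XY Xu Ys suD csu => a b; lra.
Qed.

Lemma potential_greedy_pick (X Y : K) (u s : nat) :
  (0 < s <= u)%N -> cs <= X -> Y <= cs + u%:R * D ->
  X / s%:R < Y / u%:R \/ (X / s%:R = Y / u%:R /\ (u <= s)%N) ->
  X + potential (u - s) <= potential u.
Proof.
move=> /andP[s0 su] csX YD pick.
have u0 : (0 < u)%N by apply: leq_trans su.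
have ur0 : 0 < u%:R :> K by rewrite ltr0n.
have XD : X * u%:R <= (cs + u%:R * D) * s%:R.
  by apply: le_trans (greedy_pick_le s0 u0 pick) _; rewrite ler_pM2r ?ltr0n.
have [Esu|nsu] := eqVneq s u.
  rewrite Esu subnn addr0; apply: le_trans (potential_ge u0).
  by move: XD; rewrite Esu ler_pM2r.
have ku : k + 1 <= u%:R.
  by rewrite leNgt; apply: contra nsu => uk; rewrite (greedy_pick_all _ uk csX YD pick) ?s0.
have rate : X <= (cs / (k + 1) + D) * s%:R.
  have k1 : 0 < k + 1 by rewrite ltr_pwDr ?ltr01.
  have w1 : 1 <= u%:R / (k + 1) by rewrite ler_pdivlMr // mul1r.
  have cs_rate : cs * s%:R <= cs / (k + 1) * s%:R * u%:R.
    have -> : cs / (k + 1) * s%:R * u%:R = cs * s%:R * (u%:R / (k + 1)) by ring.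
    by rewrite ler_peMr // mulr_ge0 ?ler0n ?ltW.
  rewrite -(ler_pM2r ur0); move: XD cs_rate; move: (cs / (k + 1)) (s%:R) (u%:R).
  move=> a b c; lra.
have ltsu : (s < u)%N by rewrite ltn_neqAle nsu su.
rewrite -(subnK su) addnK -(prednK (_ : 0 < u - s)%N) ?subn_gt0 // potential_addn.
lra.
Qed.

Lemma potential_le (alpha : K) (m : nat) : 0 < alpha -> alpha * m%:R <= k ->
  potential m <= cs * (1 + alpha^-1).
Proof.
case: m => [|n] a0 amk.
  by rewrite mulr_ge0 ?addr_ge0 ?invr_ge0 ?ler01 ?ltW.
have k0 : 0 < k by apply: lt_le_trans amk; rewrite mulr_gt0 ?ltr0n.
have k1 : 0 < k + 1 by rewrite ltr_pwDr ?ltr01.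
have M0 : 0 <= n%:R + 1 :> K by rewrite addr_ge0 ?ler0n ?ler01.
have DM : D * (n%:R + 1) <= cs * (n%:R + 1) / (k * (k + 1)).
  by rewrite ler_pdivlMr ?mulr_gt0 // mulrAC [D * _]mulrC ler_wpM2r.
have split_k : cs * (n%:R + 1) / k
    = cs * (n%:R + 1) / (k * (k + 1)) + cs * n%:R / (k + 1) + cs / (k + 1).
  by field; rewrite !lt0r_neq0.
have Mk : cs * (n%:R + 1) / k <= cs / alpha.
  rewrite ler_pdivlMr // mulrAC ler_pdivrMr // -!mulrA ler_pM2l //.
  by rewrite mulrC natr1.
have : 0 <= cs / (k + 1) by rewrite divr_ge0 ?ltW.
rewrite /potential; lra.
Qed.
End Potential.

Section Solutions.
Variables (K : archiRealFieldType) (T : finType) (e : rel T) (Q Rl B : {set T})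
  (hmax : nat) (cs cr : K).
Hypotheses (cs_ge0 : 0 <= cs) (cr_ge0 : 0 <= cr).

Lemma cost_ge0 (Bp Rp : {set T}) : 0 <= cost cs cr Bp Rp.
Proof. by rewrite addr_ge0 // mulr_ge0 ?ler0n. Qed.

Lemma cost_set0 : cost cs cr (@set0 T) set0 = 0.
Proof. by rewrite /cost !cards0 !mulr0 addr0. Qed.

Lemma cost_setU1U (P Sel R : {set T}) b : b \notin P ->
  cost cs cr (b |: P) (Sel :|: R) = cost cs cr P Sel + (cs + cr * #|R :\: Sel|%:R).
Proof.
move=> bP; rewrite /cost cardsU1 bP cardsUD !natrD mulrDr [cr * (_ + _)]mulrDr.
by rewrite mulr1; lra.
Qed.

Lemma feasible_cost_ge q (Bp Rp : {set T}) : q \in Q ->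
  feasible e Q Rl B hmax Bp Rp -> cs <= cost cs cr Bp Rp.
Proof.
move=> qQ [_ _ /(_ q qQ) [b bBp _]].
have Bp1 : 1 <= #|Bp|%:R :> K by rewrite ler1n card_gt0; apply/set0Pn; exists b.
have : cs <= cs * #|Bp|%:R by rewrite -[X in X <= _]mulr1 ler_wpM2l.
have : 0 <= cr * #|Rp|%:R by rewrite mulr_ge0 ?ler0n.
rewrite /cost; lra.
Qed.

Lemma feasible_single_sink (Bp Rp : {set T}) :
  feasible e Q Rl B hmax Bp Rp -> #|Bp| = 1%N ->
  exists2 b, b \in B & Q \subset Qi e Q hmax b.
Proof.
move=> [sBp _ reach] /eqP/cards1P[b Bp_b]; exists b.
  by apply: (subsetP sBp); rewrite Bp_b set11.
apply/subsetP => q qQ; rewrite inE qQ; apply/asboolP.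
have [b'] := reach q qQ; rewrite Bp_b inE => /eqP-> [p [ep lp sp _]].
by exists p; split => //; apply/allP => v; rewrite inE.
Qed.
End Solutions.

Section Greedy.
Variables (K : archiRealFieldType) (T : finType) (e : rel T) (Q Rl B : {set T})
  (hmax : nat) (cs cr k : K).
Hypotheses (dQR : [disjoint Q & Rl]) (dQB : [disjoint Q & B]) (dRB : [disjoint Rl & B]).
Hypotheses (cs_gt0 : 0 < cs) (cr_gt0 : 0 < cr) (k_ge0 : 0 <= k)
  (kD_le_cs : k * (k + 1) * (cr * hmax.-1%:R) <= cs).
Variable bs : T.
Hypotheses (bsB : bs \in B) (Q_sub_Qi : Q \subset Qi e Q hmax bs).

Let D_ge0 : 0 <= cr * hmax.-1%:R. Proof. by rewrite mulr_ge0 ?ler0n ?ltW. Qed.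
Let Phi := potential cs (cr * hmax.-1%:R) k.

Lemma greedy_step_potential P Sel Unc P' Sel' Unc' :
  greedy_step e Q Rl B hmax cs cr (P, Sel, Unc) (P', Sel', Unc') ->
  Unc \subset Q -> (bs \in P -> Unc = set0) ->
  [/\ Unc' \subset Q, bs \in P' -> Unc' = set0
    & cost cs cr P' Sel' + Phi #|Unc'| <= cost cs cr P Sel + Phi #|Unc|].
Proof.
case=> rh [b [cand_b valid pick [-> -> ->]]] UncQ bsP.
have /and3P[_ bP Qb_Unc] := cand_b.
have Qbs_Unc : Qi e Q hmax bs :&: Unc = Unc.
  by apply/setIidPr; apply: subset_trans UncQ Q_sub_Qi.
have cand_bs : [&& bs \in B, bs \notin P & Qi e Q hmax bs :&: Unc != set0].
  rewrite bsB Qbs_Unc /=; apply/andP; split.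
    by apply/negP => /bsP Unc0; move: Qb_Unc; rewrite Unc0 setI0 eqxx.
  by apply: contraNneq Qb_Unc => ->; rewrite setI0.
split; first exact: subset_trans (subsetDl _ _) UncQ.
  by rewrite in_setU1 => /orP[/eqP<-|/bsP->]; rewrite ?Qbs_Unc ?setDv ?set0D.
have := pick bs cand_bs; have := valid bs cand_bs; rewrite Qbs_Unc => valid_bs pick_bs.
have nrelays : (#|rh bs :\: Sel| <= #|Unc| * hmax.-1)%N.
  apply: leq_trans (subset_leq_card (subsetDl _ _)) _.
  exact: (card_valid_relays (e := e) dQR dQB dRB bsB UncQ valid_bs).
have Phi_step := potential_greedy_pick cs_gt0 D_ge0 k_ge0 kD_le_cs _ _ _ pick_bs.
rewrite cost_setU1U // (cardsDS (subsetIr _ Unc)).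
have : cs + cr * #|rh b :\: Sel|%:R + Phi (#|Unc| - #|Qi e Q hmax b :&: Unc|) <= Phi #|Unc|.
  apply: Phi_step.
  - by rewrite card_gt0 Qb_Unc subset_leq_card ?subsetIr.
  - by rewrite lerDl mulr_ge0 ?ler0n ?ltW.
  - by rewrite lerD2l mulrCA ler_pM2l // -natrM ler_nat.
lra.
Qed.

Lemma greedy_reach_cost P Sel Unc Bo Ro :
  greedy_reach e Q Rl B hmax cs cr (P, Sel, Unc) (Bo, Ro, set0) ->
  Unc \subset Q -> (bs \in P -> Unc = set0) ->
  cost cs cr Bo Ro <= cost cs cr P Sel + Phi #|Unc|.
Proof.
move E: (P, Sel, Unc) => st; move E': (Bo, Ro, set0) => st' reach.
elim: reach P Sel Unc E E' => [st0 | st0 [[P' Sel'] Unc'] st'' step _ IH] P Sel Unc Est0.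
  by rewrite -Est0 => -[-> -> <-] _ _; rewrite cards0 addr0.
subst st0; move=> E' UncQ bsP; have [UncQ' bsP' Phi_le] := greedy_step_potential step UncQ bsP.
exact: le_trans (IH _ _ _ erefl E' UncQ' bsP') Phi_le.
Qed.
End Greedy.

Theorem corollary1 (K : archiRealFieldType) (T : finType) (e : rel T)
    (Q Rl B : {set T}) (hmax : nat) (cs cr alpha : K) :
  symmetric e -> irreflexive e ->
  [disjoint Q & Rl] -> [disjoint Q & B] -> [disjoint Rl & B] ->
  Q :|: Rl :|: B = setT ->
  (0 < hmax)%N -> 0 < cs -> 0 < cr ->
  (exists Bp Rp, feasible e Q Rl B hmax Bp Rp /\ #|Bp| = 1%N) ->
  0 < alpha <= 1 ->
  cs / cr >= (Num.ceil (alpha * #|Q|%:R))%:~R * ((Num.ceil (alpha * #|Q|%:R))%:~R + 1)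
               * (hmax.-1)%:R ->
  forall Bo Ro, smartselect_output e Q Rl B hmax cs cr Bo Ro ->
  forall Bs Rs, optimal e Q Rl B hmax cs cr Bs Rs ->
  cost cs cr Bo Ro / cost cs cr Bs Rs <= 1 + alpha^-1.
Proof.
move=> _ _ dQR dQB dRB _ _ cs_gt0 cr_gt0 [Bp [Rp [feasBp Bp1]]] /andP[a_gt0 _] ratio
  Bo Ro out Bs Rs [feasBs optBs].
have [cs_ge0 cr_ge0] := (ltW cs_gt0, ltW cr_gt0).
have rhs_ge0 : 0 <= 1 + alpha^-1 by rewrite addr_ge0 ?ler01 ?invr_ge0 ?ltW.
have [Q0|[q qQ]] := set_0Vmem Q.
  (* with no sources the optimum is (set0, set0), of cost 0, and x / 0 = 0 *)
  have : cost cs cr Bs Rs <= 0.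
    by rewrite -(cost_set0 T cs cr); apply: optBs; split=> [||q]; rewrite ?sub0set // Q0 inE.
  by rewrite le_eqVlt ltNge cost_ge0 // orbF => /eqP->; rewrite invr0 mulr0.
have opt_ge := feasible_cost_ge cs_ge0 cr_ge0 qQ feasBs.
suff out_le : cost cs cr Bo Ro <= cs * (1 + alpha^-1).
  rewrite ler_pdivrMr ?(lt_le_trans cs_gt0) //; apply: le_trans out_le _.
  by rewrite mulrC ler_wpM2l.
case: out => [[b [_ [-> ->]]] | [_ _ reach]].
  by rewrite /cost cards1 cards0 mulr0 addr0 mulr1 ler_peMr // lerDl invr_ge0 ltW.
have [bs bsB Q_sub_Qi] := feasible_single_sink feasBp Bp1.
set k := (Num.ceil (alpha * #|Q|%:R))%:~R : K.
have am_le_k : alpha * #|Q|%:R <= k := ceil_ge _.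
have k_ge0 : 0 <= k by apply: le_trans am_le_k; rewrite mulr_ge0 ?ler0n ?ltW.
have kD_le_cs : k * (k + 1) * (cr * hmax.-1%:R) <= cs.
  by move: ratio; rewrite -/k ler_pdivlMr // [cr * _]mulrC mulrA.
have nothing_picked : bs \in set0 -> Q = set0 by rewrite inE.
apply: le_trans (greedy_reach_cost dQR dQB dRB cs_gt0 cr_gt0 k_ge0 kD_le_cs bsB
  Q_sub_Qi reach (subxx _) nothing_picked) _.
by rewrite cost_set0 add0r; apply: potential_le.
Qed.
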